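(* Let $\underline{T}=(T_1,\dots,T_k)$ be a tuple of contractions on a Hilbert space $\mathcal{H}$ and $q_{ij}\in\mathbb{T}$ ($1\le i<j\le k$) with $T_iT_j=q_{ij}T_jT_i$ for $i<j$, and let $u\subseteq\{1,\dots,k\}$. Then \[ S(u)=\sum_{v\subseteq u}(-1)^{|v|}(T^{e(v)})^*T^{e(v)}\ge0 \] in each of the following cases: (i) each $T_i$ is an isometry; (ii) $\|T_1\|^2+\dots+\|T_k\|^2\le1$. Here for $v=\{n_1<\dots<n_r\}$, $T^{e(v)}=T_{n_1}\cdots T_{n_r}$ and $T^{e(\emptyset)}=I$. *)

From HB Require Import structures.
From mathcomp Require Import all_boot all_order all_algebra.
From mathcomp Require Import complex.
From mathcomp Require Import reals.
Set Implicit Arguments. Unset Strict Implicit. Unset Printing Implicit Defensive.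
Import Order.TTheory GRing.Theory Num.Theory.
Local Open Scope ring_scope.

Section Hilbert.
Variables (R : realType) (V : lmodType R[i]).

Definition is_inner_product (ip : V -> V -> R[i]) : Prop :=
  [/\ forall (a : R[i]) x y z, ip (a *: x + y) z = a * ip x z + ip y z,
      forall x y, ip y x = Num.conj (ip x y),
      forall x, 0 <= ip x x &
      forall x, ip x x = 0 -> x = 0].

Definition hnorm (ip : V -> V -> R[i]) (x : V) : R := Num.sqrt (complex.Re (ip x x)).

Definition complete_ip (ip : V -> V -> R[i]) : Prop :=
  forall s : nat -> V,
    (forall e : R, 0 < e -> exists N, forall m n, (N <= m)%N -> (N <= n)%N ->
        hnorm ip (s m - s n) < e) ->
    exists l : V, forall e : R, 0 < e -> exists N, forall n, (N <= n)%N ->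
        hnorm ip (s n - l) < e.

Definition is_hilbert (ip : V -> V -> R[i]) : Prop :=
  is_inner_product ip /\ complete_ip ip.

Definition opnorm (ip : V -> V -> R[i]) (T : V -> V) : R :=
  reals.sup (fun r : R => exists x, hnorm ip x <= 1 /\ r = hnorm ip (T x)).

Definition is_contraction (ip : V -> V -> R[i]) (T : V -> V) := forall x, hnorm ip (T x) <= hnorm ip x.
Definition is_isometry (ip : V -> V -> R[i]) (T : V -> V) := forall x, hnorm ip (T x) = hnorm ip x.

Definition is_adjoint (ip : V -> V -> R[i]) (A B : V -> V) := forall x y, ip (A x) y = ip x (B y).

Definition positive_op (ip : V -> V -> R[i]) (S : V -> V) := forall x, 0 <= ip (S x) x.

(* T^{e(v)} = T_{n1} ... T_{nr} for v = {n1 < ... < nr}; T^{e(emptyset)} = I *)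
Definition Tpow (k : nat) (T : 'I_k -> V -> V) (v : {set 'I_k}) : V -> V :=
  foldr (fun i f => T i \o f) id (enum v).

(* S(u) = sum_{v subset u} (-1)^{|v|} (T^{e(v)})^* T^{e(v)}, where
   Ad v is the adjoint of T^{e(v)} *)
Definition Sop (k : nat) (T : 'I_k -> V -> V) (Ad : {set 'I_k} -> V -> V)
    (u : {set 'I_k}) : V -> V :=
  fun x => \sum_(v in powerset u) (-1) ^+ #|v| *: Ad v (Tpow T v x).

End Hilbert.

(* Write N y := ||y||^2, so that
   <S(u) x, x> = sum_(v in powerset u) (-1)^|v| N (T^e(v) x).
   Adding to w an index a larger than all of w gives T^e(v + a) = T^e(v) T_a, hence
   the recursion <S(w + a) x, x> = <S(w) x, x> - <S(w) T_a x, T_a x>.  For isometries this recursion makes S(w)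
   vanish for w <> set0.  If N (T_i y) <= c_i N y with sum_i c_i <= 1, a joint
   induction on w shows (1 - sum_(i in w) c_i) N x <= <S(w) x, x> <= N x, and
   c_i := ||T_i||^2 works. *)

From HB Require Import structures.
From mathcomp Require Import all_boot all_order all_algebra.
From mathcomp Require Import complex.
From mathcomp Require Import reals.
From mathcomp Require Import lra.
From mathcomp Require classical_sets.
Import Order.TTheory GRing.Theory Num.Theory.
Local Open Scope ring_scope.
Set Implicit Arguments. Unset Strict Implicit.

Section InnerProduct.
Variables (R : realType) (V : lmodType R[i]) (ip : V -> V -> R[i]).
Hypothesis ip_inner : is_inner_product ip.

(* [conjc_real] does not match [Num.conj] syntactically. *)
Lemma conj_real (r : R) : Num.conj r%:C%C = r%:C%C.
Proof. exact: conjc_real. Qed.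

Lemma ipDl x y z : ip (x + y) z = ip x z + ip y z.
Proof. by case: ip_inner => lin _ _ _; have := lin 1 x y z; rewrite scale1r mul1r. Qed.

Lemma ip0l z : ip 0 z = 0.
Proof. by apply: (addrI (ip 0 z)); rewrite -ipDl !addr0. Qed.

Lemma ipZl a x z : ip (a *: x) z = a * ip x z.
Proof.
by case: ip_inner => lin _ _ _; have := lin a x 0 z; rewrite !addr0 ip0l addr0.
Qed.

Lemma ip_suml (I : finType) (P : pred I) (f : I -> V) z :
  ip (\sum_(i | P i) f i) z = \sum_(i | P i) ip (f i) z.
Proof. exact: (big_morph (ip^~ z) (fun x y => ipDl x y z) (ip0l z)). Qed.

Lemma ipxx y : ip y y = (hnorm ip y ^+ 2)%:C%C.
Proof.
case: ip_inner => _ _ /(_ y) + _; rewrite /hnorm.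
by case: (ip y y) => a b; rewrite lecE /= => /andP[/eqP -> a_ge0]; rewrite sqr_sqrtr.
Qed.

Lemma hnorm_ge0 y : 0 <= hnorm ip y.
Proof. exact: sqrtr_ge0. Qed.

Lemma hnorm_eq0 y : hnorm ip y = 0 -> y = 0.
Proof.
by case: ip_inner => _ _ _ definite y0; apply: definite; rewrite ipxx y0 expr0n.
Qed.

Lemma hnormZ (r : R) y : hnorm ip (r%:C%C *: y) = `|r| * hnorm ip y.
Proof.
case: ip_inner => _ conj_sym _ _.
rewrite {1}/hnorm ipZl conj_sym ipZl ipxx -rmorphM conj_real -rmorphM /=.
by rewrite mulrA -expr2 -exprMn sqrtr_sqr normrM (ger0_norm (hnorm_ge0 y)).
Qed.

Lemma ip_adjoint_self (A B : V -> V) x :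
  is_adjoint ip A B -> ip (B (A x)) x = (hnorm ip (A x) ^+ 2)%:C%C.
Proof.
by case: ip_inner => _ conj_sym _ _ adjAB; rewrite conj_sym -adjAB ipxx conj_real.
Qed.

Section Contraction.
Variables (T : {linear V -> V}).
Hypothesis T_contr : is_contraction ip T.

Lemma hnorm_le_opnorm x : hnorm ip x <= 1 -> hnorm ip (T x) <= opnorm ip T.
Proof.
move=> x_le1; apply: sup_upper_bound; last by exists x.
split; first by exists (hnorm ip (T x)), x.
by exists 1 => _ [z [z_le1 ->]]; exact: le_trans (T_contr z) z_le1.
Qed.

Lemma opnorm_ge0 : 0 <= opnorm ip T.
Proof.
apply: le_trans (hnorm_ge0 _) (hnorm_le_opnorm (x := 0) _).
by rewrite /hnorm ip0l sqrtr0.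
Qed.

Lemma hnorm_opnorm y : hnorm ip (T y) <= opnorm ip T * hnorm ip y.
Proof.
have [y0 | y_neq0] := eqVneq (hnorm ip y) 0.
  by rewrite (hnorm_eq0 y0) linear0 /hnorm ip0l sqrtr0 mulr0.
set h := hnorm ip y in y_neq0 *.
have h_ge0 : 0 <= h := hnorm_ge0 y.
have def_y : y = h%:C%C *: (h^-1%:C%C *: y) by rewrite scalerA -rmorphM mulfV ?scale1r.
have unit_y : hnorm ip (h^-1%:C%C *: y) = 1 by rewrite hnormZ ger0_norm ?invr_ge0 ?mulVf.
rewrite def_y linearZ hnormZ ger0_norm // mulrC ler_wpM2r //.
by apply: hnorm_le_opnorm; rewrite unit_y.
Qed.

Lemma hnorm_opnorm_sqr y :
  hnorm ip (T y) ^+ 2 <= opnorm ip T ^+ 2 * hnorm ip y ^+ 2.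
Proof.
rewrite -exprMn lerXn2r ?nnegrE ?hnorm_opnorm ?hnorm_ge0 //.
by rewrite mulr_ge0 ?opnorm_ge0 ?hnorm_ge0.
Qed.

End Contraction.

End InnerProduct.

Lemma big_powersetU1 (T : finType) (M : nmodType) (G : {set T} -> M)
    (a : T) (w : {set T}) :
  a \notin w ->
  \sum_(v in powerset (a |: w)) G v =
    \sum_(v in powerset w) G v + \sum_(v in powerset w) G (a |: v).
Proof.
move=> aNw; have aNsub (v : {set T}) : v \subset w -> a \notin v.
  by move=> /subsetP vw; apply: contra aNw => /vw.
rewrite (bigID (fun v : {set T} => a \in v)) /= addrC; congr (_ + _).
  apply: eq_bigl => v; rewrite !powersetE.
  apply/andP/idP => [[vaw av] | vw].
    by rewrite -(setU1K aNw) subsetD1 vaw.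
  by split; [exact: subset_trans vw (subsetU1 _ _) | exact: aNsub].
rewrite (reindex_onto (fun v => a |: v) (fun v => v :\ a)) /=; last first.
  by move=> v /andP[_ av]; rewrite setD1K.
apply: eq_bigl => v; rewrite !powersetE setU11 andbT.
apply/andP/idP => [[vaw /eqP <-] | vw].
  by rewrite -(setU1K aNw) setSD.
by rewrite setU1K ?aNsub // setUS.
Qed.

Lemma set_ord_max_ind (k : nat) (P : {set 'I_k} -> Prop) :
  P set0 ->
  (forall (a : 'I_k) (w : {set 'I_k}),
     (forall i, i \in w -> (i < a)%N) -> P w -> P (a |: w)) ->
  forall w, P w.
Proof.
move=> P0 PU w; elim: {w}#|w| {-2}w (leqnn #|w|) => [|n IH] w w_le.
  by move: w_le; rewrite leqn0 cards_eq0 => /eqP ->.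
have [-> // | [i0 w_i0]] := set_0Vmem w.
have [a a_w a_max] := @arg_maxnP _ i0 (fun i => i \in w) val w_i0.
rewrite -(setD1K a_w); apply: PU => [i | ].
  by rewrite in_setD1 ltn_neqAle => /andP[ia /a_max /= ->]; rewrite andbT.
by apply: IH; move: w_le; rewrite (cardsD1 a) a_w.
Qed.

Section AlternatingSum.
Variables (R : realType) (V : lmodType R[i]) (k : nat) (F : 'I_k -> V -> V).

Lemma sorted_enum_set (A : {set 'I_k}) : sorted (relpre val ltn) (enum A).
Proof.
rewrite -sorted_map -[enum _](eq_filter (mem_enum _)).
rewrite -(eq_filter (mem_map val_inj _)) -filter_map.
by rewrite (sorted_filter ltn_trans) // unlock val_ord_enum iota_ltn_sorted.
Qed.

Lemma enum_setU1_max (a : 'I_k) (v : {set 'I_k}) :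
  (forall i, i \in v -> (i < a)%N) -> enum (a |: v) = rcons (enum v) a.
Proof.
move=> v_lt_a; apply: (irr_sorted_eq (leT := relpre val ltn)).
- by move=> x y z; apply: ltn_trans.
- by move=> x; apply: ltnn.
- exact: sorted_enum_set.
- have := sorted_enum_set v; case E: (enum v) => [|x p] //= x_p.
  by rewrite rcons_path x_p; apply: v_lt_a; rewrite -mem_enum E mem_last.
- by move=> i; rewrite mem_enum mem_rcons in_cons mem_enum in_setU1.
Qed.

Lemma Tpow_set0 y : Tpow F set0 y = y.
Proof. by rewrite /Tpow enum_set0. Qed.

Lemma Tpow_setU1_max (a : 'I_k) (v : {set 'I_k}) y :
  (forall i, i \in v -> (i < a)%N) -> Tpow F (a |: v) y = Tpow F v (F a y).
Proof.
move=> v_lt_a; rewrite /Tpow enum_setU1_max // foldr_rcons.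
by elim: (enum v) => //= i s ->.
Qed.

Variable N : V -> R.

Definition Sform (w : {set 'I_k}) y :=
  \sum_(v in powerset w) (-1) ^+ #|v| * N (Tpow F v y).

Lemma Sform_set0 y : Sform set0 y = N y.
Proof. by rewrite /Sform powerset0 big_set1 cards0 expr0 mul1r Tpow_set0. Qed.

Lemma Sform_setU1_max (a : 'I_k) (w : {set 'I_k}) y :
  (forall i, i \in w -> (i < a)%N) ->
  Sform (a |: w) y = Sform w y - Sform w (F a y).
Proof.
move=> w_lt_a; have aNw : a \notin w by apply/negP => /w_lt_a; rewrite ltnn.
rewrite /Sform big_powersetU1 // -sumrN; congr (_ + _); apply: eq_bigr => v.
rewrite powersetE => /subsetP vw; have aNv : a \notin v by apply: contra aNw => /vw.
rewrite cardsU1 aNv exprS mulN1r mulNr Tpow_setU1_max // => i /vw; exact: w_lt_a.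
Qed.

Lemma Sform_isometry :
  (forall i y, N (F i y) = N y) ->
  forall w y, Sform w y = if w == set0 then N y else 0.
Proof.
move=> N_F; apply: set_ord_max_ind => [y | a w w_lt_a IH y].
  by rewrite Sform_set0 eqxx.
rewrite Sform_setU1_max // !IH N_F subrr.
by case: eqP => // /setP /(_ a); rewrite !inE eqxx.
Qed.

Section Bounds.
Variable c : 'I_k -> R.
Hypotheses (N_ge0 : forall y, 0 <= N y) (c_ge0 : forall i, 0 <= c i).
Hypotheses (c_sum_le1 : \sum_i c i <= 1) (N_F : forall i y, N (F i y) <= c i * N y).

Lemma sum_set_le1 (w : {set 'I_k}) : \sum_(i in w) c i <= 1.
Proof.
apply: le_trans c_sum_le1; rewrite [leRHS](bigID (mem w)) /= lerDl.
exact: sumr_ge0.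
Qed.

Lemma Sform_bounds (w : {set 'I_k}) y :
  (1 - \sum_(i in w) c i) * N y <= Sform w y <= N y.
Proof.
elim/set_ord_max_ind: w y => [y | a w w_lt_a IH y].
  by rewrite Sform_set0 big_set0 subr0 mul1r lexx.
have aNw : a \notin w by apply/negP => /w_lt_a; rewrite ltnn.
have cw_le1 := sum_set_le1 w.
rewrite Sform_setU1_max // big_setU1 //=.
have /andP[lo_y up_y] := IH y; have /andP[lo_Fy up_Fy] := IH (F a y).
have N_Fa := N_F a y; have Ny_ge0 := N_ge0 y; have NFy_ge0 := N_ge0 (F a y).
have rest_ge0 : 0 <= (1 - \sum_(i in w) c i) * N (F a y).
  by rewrite mulr_ge0 ?subr_ge0.
by apply/andP; split; lra.
Qed.

Lemma Sform_ge0 (w : {set 'I_k}) y : 0 <= Sform w y.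
Proof.
have /andP[lo _] := Sform_bounds w y; apply: le_trans lo.
by rewrite mulr_ge0 // subr_ge0 sum_set_le1.
Qed.

End Bounds.

End AlternatingSum.

Lemma ip_Sop (R : realType) (V : lmodType R[i]) (ip : V -> V -> R[i]) (k : nat)
    (F : 'I_k -> V -> V) (Ad : {set 'I_k} -> V -> V) (u : {set 'I_k}) x :
  is_inner_product ip -> (forall v, is_adjoint ip (Tpow F v) (Ad v)) ->
  ip (Sop F Ad u x) x = (Sform F (fun y => hnorm ip y ^+ 2) u x)%:C%C.
Proof.
move=> ip_inner adj; rewrite /Sop ip_suml // rmorph_sum; apply: eq_bigr => v _.
by rewrite rmorphM rmorphXn rmorphN1 ipZl // (ip_adjoint_self ip_inner _ (adj v)).
Qed.

Theorem lemma4p6 (R : realType) (V : lmodType R[i]) (ip : V -> V -> R[i])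
    (k : nat) (T : 'I_k -> {linear V -> V}) (q : 'I_k -> 'I_k -> R[i])
    (u : {set 'I_k}) (Ad : {set 'I_k} -> V -> V) :
  is_hilbert ip ->
  (forall i, is_contraction ip (T i)) ->
  (forall i j : 'I_k, (i < j)%N -> `|q i j| = 1) ->
  (forall (i j : 'I_k) x, (i < j)%N -> T i (T j x) = q i j *: T j (T i x)) ->
  (forall v, is_adjoint ip (Tpow (fun i => T i : V -> V) v) (Ad v)) ->
  ((forall i, is_isometry ip (T i)) \/
   \sum_(i < k) opnorm ip (T i) ^+ 2 <= 1) ->
  positive_op ip (Sop (fun i => T i : V -> V) Ad u).
Proof.
move=> [ip_inner _] T_contr _ _ adj T_cases x; rewrite /positive_op ip_Sop // ler0c.
case: T_cases => [T_isom | T_small].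
  rewrite Sform_isometry => [|i y]; last by rewrite T_isom.
  by case: ifP => // _; exact: sqr_ge0.
apply: (Sform_ge0 (c := fun i => opnorm ip (T i) ^+ 2)) => // [y | i | i y].
- exact: sqr_ge0.
- exact: sqr_ge0.
- exact: hnorm_opnorm_sqr.
Qed.
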